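(* Let $F$ be a field of characteristic $0$, $L=F(I)$ with $I^2=-1$, and $D=(V,E)$ a simply laced diagram on vertices $v_1,\dots,v_n$. For $1\le r\le n$ let $\mathfrak k_{\le r}$ be the Lie algebra with generators $X_1,\dots,X_r$ and relations $[X_i,[X_i,X_j]]=-X_j$ if $\{v_i,v_j\}\in E$, $[X_i,X_j]=0$ if $i\ne j$ and $\{v_i,v_j\}\notin E$ ($i,j\le r$). Let $1\le r<n$ and let $\rho:\mathfrak k_{\le r}\to\operatorname{End}(L^s)$ be a generalized spin representation. (a) If $v_{r+1}$ is adjacent to none of $v_1,\dots,v_r$, then $\rho$ extends to a generalized spin representation $\rho':\mathfrak k_{\le r+1}\to\operatorname{End}(L^s)$ with $\rho'(X_{r+1})=\tfrac12I\,\mathrm{id}_s$. (b) Otherwise, let $s_0$ be the sign automorphism of $\mathfrak k_{\le r}$ with $s_0(X_i)=-X_i$ if $\{v_i,v_{r+1}\}\in E$ and $s_0(X_i)=X_i$ otherwise. Then there is a generalized spin representation $\rho':\mathfrak k_{\le r+1}\to\operatorname{End}(L^s\oplus L^s)$ with $\rho'|_{\mathfrak k_{\le r}}=\rho\oplus(\rho\circ s_0)$ and $\rho'(X_{r+1})=\tfrac12 I\,\mathrm{id}_s\otimes\begin{pmatrix}0&1\\1&0\end{pmatrix}$, i.e. in block form $\rho'(X_{r+1})=\begin{pmatrix}0&\tfrac12 I\,\mathrm{id}_s\\ \tfrac12 I\,\mathrm{id}_s&0\end{pmatrix}$.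
   Context: $\mathfrak k_{\le r}$ is (by Berman's theorem) the maximal compact subalgebra of the Kac--Moody algebra over $F$ whose diagram is the subgraph of $D$ induced on $v_1,\dots,v_r$, with Berman generators $X_1,\dots,X_r$. A generalized spin representation of a Lie algebra given by such a presentation is a Lie algebra homomorphism $\rho$ into $\operatorname{End}(L^s)$ (over $F$) with $\rho(X_i)^2=-\tfrac14\mathrm{id}_s$ for all generators $X_i$. A sign automorphism is $X_i\mapsto\epsilon_iX_i$ with $\epsilon_i\in\{\pm1\}$. *)

From HB Require Import structures.
From mathcomp Require Import all_boot all_order all_algebra.
Set Implicit Arguments. Unset Strict Implicit. Unset Printing Implicit Defensive.
Import GRing.Theory.
Local Open Scope ring_scope.

Definition lie (L : fieldType) (s : nat) (A B : 'M[L]_s) : 'M[L]_s :=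
  A *m B - B *m A.

(* A Lie algebra homomorphism k_{<=r} -> End(L^s) from the Lie algebra
   presented by generators X_0..X_{r-1} (0-based) and the Berman relations
   attached to the diagram with edge relation E is (by the universal property
   of a presentation) the same thing as a family A of images of the generators
   (A i = rho(X_i)) satisfying the defining relations. *)
Definition berman_rep (L : fieldType) (s : nat) (E : nat -> nat -> bool)
    (r : nat) (A : nat -> 'M[L]_s) : Prop :=
  forall i j, (i < r)%N -> (j < r)%N ->
    (E i j -> lie (A i) (lie (A i) (A j)) = - A j) /\
    (i != j -> ~~ E i j -> lie (A i) (A j) = 0).

Definition gen_spin_rep (L : fieldType) (s : nat) (E : nat -> nat -> bool)
    (r : nat) (A : nat -> 'M[L]_s) : Prop :=
  berman_rep E r A /\
  (forall i, (i < r)%N -> A i *m A i = (- (4%:R)^-1) %:M).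

(* The sign s0(X_i) = eps_i X_i, with eps_i = -1 iff v_i is adjacent to v_k. *)
Definition sign0 (L : fieldType) (E : nat -> nat -> bool) (k i : nat) : L :=
  if E i k then -1 else 1.

(* Two elements X, Y with X^2 = Y^2 = -1/4 either commute, and then [X, Y] = 0,
   or anticommute, and then [X, [X, Y]] = 4 X^2 Y = -Y: such pairs realise the
   Berman relations of a non-edge, resp. an edge.  In case (a) the new generator
   is the central scalar I/2, which commutes with everything.  In case (b) the
   generators X_i act diagonally by A_i (+) eps_i A_i and the new generator by
   the swap J = (I/2) [[0,1],[1,0]]; conjugating diag(a, eps a) by J exchanges
   the two blocks, so X_i commutes with J when eps_i = 1 and anticommutes with
   it when eps_i = -1, i.e. exactly when v_i is adjacent to v_{r+1}. *)
From HB Require Import structures.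
From mathcomp Require Import all_boot all_order all_algebra.
Set Implicit Arguments. Unset Strict Implicit. Unset Printing Implicit Defensive.
Import GRing.Theory.
Local Open Scope ring_scope.

Section Bracket.
Variables (L : fieldType) (s : nat).
Implicit Types (X Y a b : 'M[L]_s).

Lemma lieZl (e : L) X Y : lie (e *: X) Y = e *: lie X Y.
Proof. by rewrite /lie scalerBr -scalemxAl -scalemxAr. Qed.

Lemma lieZr (e : L) X Y : lie X (e *: Y) = e *: lie X Y.
Proof. by rewrite /lie scalerBr -scalemxAl -scalemxAr. Qed.

Lemma lie_comm X Y : X *m Y = Y *m X -> lie X Y = 0.
Proof. by rewrite /lie => ->; rewrite subrr. Qed.

Lemma lie_anticomm X Y :
  X *m Y = - (Y *m X) -> lie X (lie X Y) = 4%:R *: (X *m X *m Y).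
Proof.
move=> XY; have lieXY : lie X Y = 2%:R *: (X *m Y).
  by rewrite /lie -XY scaler_nat mulr2n.
rewrite lieXY lieZr /lie -[X *m Y *m X]mulmxA -(opprK (Y *m X)) -XY.
by rewrite mulmxN opprK mulmxA -mulr2n -scaler_nat scalerA -natrM.
Qed.

Lemma lie_anticomm_spin X Y :
  (4%:R : L) != 0 -> X *m X = (- (4%:R)^-1)%:M -> X *m Y = - (Y *m X) ->
  lie X (lie X Y) = - Y.
Proof.
move=> h4 XX XY; rewrite lie_anticomm // XX mul_scalar_mx scalerA mulrN.
by rewrite mulfV // scaleN1r.
Qed.

Lemma lie_block_diag a b (a' b' : 'M[L]_s) :
  lie (block_mx a 0 0 b) (block_mx a' 0 0 b') = block_mx (lie a a') 0 0 (lie b b').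
Proof.
rewrite /lie !mulmx_block !mulmx0 !mul0mx !addr0 !add0r.
by rewrite opp_block_mx add_block_mx !subr0.
Qed.

Lemma mul_block_diag a b (a' b' : 'M[L]_s) :
  block_mx a 0 0 b *m block_mx a' 0 0 b' = block_mx (a *m a') 0 0 (b *m b').
Proof. by rewrite mulmx_block !mulmx0 !mul0mx !addr0 !add0r. Qed.

Lemma mul_block_antidiag a b (a' b' : 'M[L]_s) :
  block_mx 0 a b 0 *m block_mx 0 a' b' 0 = block_mx (a *m b') 0 0 (b *m a').
Proof. by rewrite mulmx_block !mulmx0 !mul0mx !addr0 !add0r. Qed.

Lemma mul_block_sign_swap (c e : L) a : e * e = 1 ->
  block_mx a 0 0 (e *: a) *m block_mx 0 c%:M c%:M 0
  = e *: (block_mx 0 c%:M c%:M 0 *m block_mx a 0 0 (e *: a)).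
Proof.
move=> ee; rewrite !mulmx_block !mulmx0 !mul0mx !addr0 !add0r scale_block_mx.
rewrite !scaler0 -!scalemxAl -!scalemxAr scalerA ee scale1r.
by rewrite scalar_mxC.
Qed.

End Bracket.

Section SpinRepresentations.
Variables (L : fieldType) (s : nat) (E : nat -> nat -> bool) (r : nat).

Lemma gen_spin_rep_sign (A : nat -> 'M[L]_s) (e : nat -> L) :
  (forall k, e k * e k = 1) ->
  gen_spin_rep E r A -> gen_spin_rep E r (fun k => e k *: A k).
Proof.
move=> ee [hB hS]; split=> [i j ri rj | i ri].
  have [rel_edge rel_nonedge] := hB i j ri rj.
  split=> [Eij | ij Eij]; rewrite !(lieZl, lieZr).
    by rewrite rel_edge // !scalerA ee mul1r scalerN.
  by rewrite rel_nonedge // !scaler0.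
by rewrite -scalemxAl -scalemxAr scalerA ee scale1r hS.
Qed.

Lemma gen_spin_rep_block_diag (A B : nat -> 'M[L]_s) :
  gen_spin_rep E r A -> gen_spin_rep E r B ->
  gen_spin_rep E r (fun k => block_mx (A k) 0 0 (B k)).
Proof.
move=> [hBA hSA] [hBB hSB]; split=> [i j ri rj | i ri].
  have [edgeA nonedgeA] := hBA i j ri rj; have [edgeB nonedgeB] := hBB i j ri rj.
  split=> [Eij | ij Eij]; rewrite !lie_block_diag.
    by rewrite edgeA // edgeB // opp_block_mx oppr0.
  by rewrite nonedgeA // nonedgeB // block_mx0.
by rewrite mul_block_diag hSA // hSB // -scalar_mx_block.
Qed.

Definition extend_rep (A : nat -> 'M[L]_s) (B : 'M[L]_s) (k : nat) :=
  if (k < r)%N then A k else B.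

Lemma extend_rep_lt (A : nat -> 'M[L]_s) B i : (i < r)%N -> extend_rep A B i = A i.
Proof. by rewrite /extend_rep => ->. Qed.

Lemma extend_rep_r (A : nat -> 'M[L]_s) B : extend_rep A B r = B.
Proof. by rewrite /extend_rep ltnn. Qed.

Lemma gen_spin_rep_extend (A : nat -> 'M[L]_s) (B : 'M[L]_s) :
  (4%:R : L) != 0 ->
  (forall i, (i < r)%N -> E r i = E i r) -> ~~ E r r ->
  gen_spin_rep E r A -> B *m B = (- (4%:R)^-1)%:M ->
  (forall i, (i < r)%N -> ~~ E i r -> A i *m B = B *m A i) ->
  (forall i, (i < r)%N -> E i r -> A i *m B = - (B *m A i)) ->
  gen_spin_rep E r.+1 (extend_rep A B).
Proof.
move=> h4 Esym_r Err [hB hS] BB comm anticomm.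
have anticomm' i : (i < r)%N -> E i r -> B *m A i = - (A i *m B).
  by move=> ri Eir; rewrite anticomm // opprK.
rewrite /extend_rep; split=> [i j | i]; rewrite !ltnS.
  rewrite [(i <= r)%N]leq_eqVlt [(j <= r)%N]leq_eqVlt.
  move=> /orP[/eqP-> | ri] /orP[/eqP-> | rj].
  - by rewrite ltnn (negbTE Err) eqxx.
  - rewrite ltnn rj Esym_r //; split=> [Ejr | _ Ejr].
      exact: lie_anticomm_spin h4 BB (anticomm' j rj Ejr).
    by rewrite lie_comm // comm.
  - rewrite ltnn ri; split=> [Eir | _ Eir].
      exact: lie_anticomm_spin h4 (hS i ri) (anticomm i ri Eir).
    exact: lie_comm (comm i ri Eir).
  - by rewrite ri rj; apply: hB.
rewrite leq_eqVlt => /orP[/eqP-> | ri]; first by rewrite ltnn.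
by rewrite ri hS.
Qed.

End SpinRepresentations.

Lemma sign0_sq (L : fieldType) (E : nat -> nat -> bool) (k i : nat) :
  sign0 L E k i * sign0 L E k i = 1.
Proof. by rewrite /sign0; case: (E i k); rewrite ?mulrNN mulr1. Qed.

Theorem mainTheorem8 (L : fieldType) (I : L)
  (charL : [pchar L] =i pred0) (HI : I ^+ 2 = -1)
  (n : nat) (E : nat -> nat -> bool)
  (Esym : forall i j, (i < n)%N -> (j < n)%N -> E i j = E j i)
  (Eirr : forall i, (i < n)%N -> ~~ E i i)
  (r s : nat) (hr1 : (1 <= r)%N) (hrn : (r < n)%N)
  (A : nat -> 'M[L]_s) (hA : gen_spin_rep E r A) :
  ((forall i, (i < r)%N -> ~~ E i r) ->
     exists A' : nat -> 'M[L]_s,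
       gen_spin_rep E r.+1 A' /\
       (forall i, (i < r)%N -> A' i = A i) /\
       A' r = (I / 2%:R)%:M) /\
  ((exists2 i, (i < r)%N & E i r) ->
     exists A' : nat -> 'M[L]_(s + s),
       gen_spin_rep E r.+1 A' /\
       (forall i, (i < r)%N ->
          A' i = block_mx (A i) 0 0 (@sign0 L E r i *: A i)) /\
       A' r = block_mx 0 (I / 2%:R)%:M (I / 2%:R)%:M 0).
Proof.
have h2 : (2%:R : L) != 0 by apply/negP => /eqP h; have := charL 2; rewrite !inE /= h eqxx.
have h4 : (4%:R : L) != 0 by rewrite (natrM L 2 2) mulf_neq0.
set c := I / 2%:R.
have cc : c * c = - (4%:R)^-1 by rewrite mulrACA -expr2 HI -invfM -natrM mulN1r.
have Esym_r i : (i < r)%N -> E r i = E i r by move=> ri; rewrite Esym // (ltn_trans ri).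
have Err : ~~ E r r := Eirr _ hrn.
split=> [nonadj | _].
  exists (extend_rep r A c%:M); split; last by split=> [i ri|]; rewrite ?extend_rep_r ?extend_rep_lt.
  apply: gen_spin_rep_extend => // [|i _ _|i ri]; last by rewrite (negbTE (nonadj i ri)).
    by rewrite -scalar_mxM cc.
  by rewrite scalar_mxC.
set J := block_mx 0 c%:M c%:M 0 : 'M[L]_(s + s).
exists (extend_rep r (fun k => block_mx (A k) 0 0 (sign0 L E r k *: A k)) J).
split; last by split=> [i ri|]; rewrite ?extend_rep_r ?extend_rep_lt.
apply: gen_spin_rep_extend => //.
- exact/gen_spin_rep_block_diag/gen_spin_rep_sign/hA/sign0_sq.
- by rewrite mul_block_antidiag -scalar_mxM cc -scalar_mx_block.
- by move=> i _ nEir; rewrite mul_block_sign_swap ?sign0_sq // /sign0 (negbTE nEir) scale1r.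
- by move=> i _ Eir; rewrite mul_block_sign_swap ?sign0_sq // /sign0 Eir scaleN1r.
Qed.
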